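(* For every $u\in\Sigma^*$ and $v\in\Sigma^+$ there is a finite automaton $\mathcal{D}_{u\$v}$ over $\Sigma\cup\{\$\}$ (with $\$\notin\Sigma$) with $L(\mathcal{D}_{u\$v})=\{u'\$v'\mid u'\in\Sigma^*,\ v'\in\Sigma^+,\ u'v'^\omega=uv^\omega\}$ whose number of states is in $\mathcal{O}(|v|(|u|+|v|))$. *)

From mathcomp Require Import all_boot.
Set Implicit Arguments. Unset Strict Implicit. Unset Printing Implicit Defensive.

(* The extended alphabet Sigma ∪ {$} is [option Sigma]: [Some a] is the letter a
   of Sigma and [None] is the fresh separator symbol $. *)
Notation dollar := (@None _).

Record dfa (A : Type) := DFA {
  dfa_state :> finType;
  dfa_init : dfa_state;
  dfa_trans : dfa_state -> A -> dfa_state;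
  dfa_final : {pred dfa_state}
}.

Definition dfa_run (A : Type) (D : dfa A) (q : dfa_state D) (w : seq A) : dfa_state D :=
  foldl (@dfa_trans A D) q w.

Definition dfa_accept (A : Type) (D : dfa A) (w : seq A) : bool :=
  @dfa_final A D (dfa_run (@dfa_init A D) w).

Definition dfa_size (A : Type) (D : dfa A) : nat := #|dfa_state D|.

(* The ultimately periodic infinite word u v^omega, as a function nat -> option Sigma
   (it only takes values [Some _] when v is nonempty). *)
Definition lasso (S : Type) (u v : seq S) : nat -> option S :=
  fun i => if i < size u then nth None (map Some u) i
           else nth None (map Some v) ((i - size u) %% size v).

Definition omega_eq (S : Type) (u v u' v' : seq S) : Prop :=
  forall i, lasso u v i = lasso u' v' i.

Definition lasso_lang (S : Type) (u v : seq S) (w : seq (option S)) : Prop :=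
  exists u' v' : seq S,
    [/\ w = map Some u' ++ dollar :: map Some v', 0 < size v' & omega_eq u' v' u v].

(* Folding every position x >= |u| of u v^omega to |u| + (x - |u|) mod |v| does not
   change the suffix starting there, so only |u| + |v| positions matter. The automaton
   checks u' against u v^omega while tracking the folded position p of |u'|; after the
   $ it checks v' against the suffix at p while counting |v'| modulo |v|. Now
   u' v'^omega = u v^omega iff both words match u v^omega there and the suffix at p has
   period |v'|; as that suffix is eventually |v|-periodic, having period |v'| only
   depends on |v'| mod |v|. This leaves O(|v| (|u| + |v|)) states. *)

From mathcomp Require Import all_boot zify boolp.
Set Implicit Arguments. Unset Strict Implicit. Unset Printing Implicit Defensive.

Definition shift T (f : nat -> T) x i := f (x + i).

Definition periodic_from T (n : nat) (g : nat -> T) (m : nat) :=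
  forall i, n <= i -> g i = g (i + m).

Notation periodic := (periodic_from 0).

Section Periodic.
Variables (T : Type) (g : nat -> T).

Lemma periodic_fromM n m : periodic_from n g m -> forall j t, n <= j -> g j = g (j + m * t).
Proof.
move=> gm j; elim=> [|t IHt] nj; first by rewrite muln0 addn0.
rewrite IHt // gm; last by lia.
by congr g; rewrite mulnS; lia.
Qed.

Lemma periodic_modn m i : periodic g m -> g (i %% m) = g i.
Proof. by move=> gm; rewrite (periodic_fromM gm (i %/ m) (leq0n (i %% m))) mulnC addnC -divn_eq. Qed.

Lemma eq_periodic_from h n m : g =1 h -> periodic_from n g m -> periodic_from n h m.
Proof. by move=> gh gm i ni; rewrite -!gh gm. Qed.

Lemma periodic_from_shift n m x : periodic_from n g m -> periodic_from n (shift g x) m.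
Proof. by move=> gm i ni; rewrite /shift addnA gm // (leq_trans ni (leq_addl _ _)). Qed.

Lemma periodic_from_periodic n p q : 0 < q -> periodic g q -> periodic_from n g p -> periodic g p.
Proof.
move=> q_gt0 gq gp i _.
have nqn : n <= i + q * n by rewrite (leq_trans (leq_pmull _ q_gt0)) // leq_addl.
by rewrite (periodic_fromM gq n) // gp // [RHS](periodic_fromM gq n) // addnAC.
Qed.

Section EventualPeriod.
Variables (n m : nat).
Hypothesis gm : periodic_from n g m.

Lemma periodicDr k : 0 < k -> periodic g (k + m) <-> periodic g k.
Proof.
move=> k_gt0; split; [move=> gkm | move=> gk].
  apply: (periodic_from_periodic (n := n) _ gkm); first by rewrite addn_gt0 k_gt0.
  by move=> j nj; rewrite (gkm j) // addnA -gm //; lia.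
apply: (periodic_from_periodic (n := n) k_gt0 gk) => j nj.
rewrite addnA -gm; [exact: gk | lia].
Qed.

Lemma periodicDMr c t : 0 < c -> periodic g (c + m * t) <-> periodic g c.
Proof.
move=> c_gt0; elim: t => [|t IHt]; first by rewrite muln0 addn0.
by rewrite mulnS addnCA addnC periodicDr // addn_gt0 c_gt0.
Qed.

Lemma periodic_mod k : 0 < k -> periodic g k <-> periodic g (k %% m + m).
Proof.
move=> k_gt0; rewrite {1}(divn_eq k m) mulnC addnC.
case: (k %/ m) (divn_eq k m) => [|q] kE.
  by rewrite muln0 addn0 periodicDr //; lia.
by rewrite mulnS addnA periodicDMr //; lia.
Qed.
End EventualPeriod.
End Periodic.

Definition reduce_index n m x := if x < n then x else n + (x - n) %% m.

Lemma reduce_index_lt n m x : 0 < m -> reduce_index n m x < n + m.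
Proof.
rewrite /reduce_index => m_gt0; case: (ltnP x n) => [/ltn_addr // | _].
by rewrite ltn_add2l ltn_pmod.
Qed.

Lemma reduce_index0 n m : reduce_index n m 0 = 0.
Proof. by rewrite /reduce_index; case: ltnP; rewrite ?leqn0 => // /eqP ->; rewrite mod0n. Qed.

Lemma reduce_indexS n m x : reduce_index n m (reduce_index n m x).+1 = reduce_index n m x.+1.
Proof.
rewrite /reduce_index; case: (ltnP x n) => // nx.
have -> : (n + (x - n) %% m).+1 < n = false by lia.
have -> : x.+1 < n = false by lia.
by rewrite -addnS addKn subSn // -addn1 -[(x - n).+1]addn1 modnDml.
Qed.

Lemma periodic_from_reduce T (f : nat -> T) n m x :
  periodic_from n f m -> shift f (reduce_index n m x) =1 shift f x.
Proof.
rewrite /reduce_index /shift => fm; case: (ltnP x n) => // nx i.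
rewrite (periodic_fromM fm ((x - n) %/ m) (_ : n <= n + (x - n) %% m + i)); last by lia.
by congr f; have := divn_eq (x - n) m; lia.
Qed.

Section Lasso.
Variable S : Type.

Lemma lasso_periodic_from (u v : seq S) : periodic_from (size u) (lasso u v) (size v).
Proof.
rewrite /lasso => i ui; rewrite ltnNge ui ltnNge (leq_trans ui (leq_addr _ _)) /=.
by rewrite -addnBAC // modnDr.
Qed.

Definition is_lasso (f : nat -> option S) (u v : seq S) : Prop :=
  [/\ mkseq f (size u) = map Some u,
      mkseq (shift f (size u)) (size v) = map Some v &
      periodic (shift f (size u)) (size v)].

Lemma eq_is_lasso f g u v : f =1 g -> is_lasso f u v -> is_lasso g u v.
Proof.
move=> fg [fu fv fp]; split; first by rewrite -(eq_mkseq fg).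
  by rewrite -fv; apply: eq_mkseq => i; rewrite /shift fg.
by apply: eq_periodic_from fp => i; rewrite /shift fg.
Qed.

Lemma is_lasso_lasso u v : 0 < size v -> is_lasso (lasso u v) u v.
Proof.
move=> v_gt0; split.
- apply: (@eq_from_nth _ None); rewrite size_mkseq ?size_map // => i ui.
  by rewrite nth_mkseq // /lasso ui.
- apply: (@eq_from_nth _ None); rewrite size_mkseq ?size_map // => i vi.
  by rewrite nth_mkseq // /shift /lasso ltnNge leq_addr /= addKn modn_small.
- by move=> i _; rewrite /shift addnA lasso_periodic_from // leq_addr.
Qed.

Lemma is_lasso_eq f u v : 0 < size v -> is_lasso f u v -> f =1 lasso u v.
Proof.
move=> v_gt0 [fu fv fp] i; rewrite /lasso; case: ltnP => [ui | ui].
  by rewrite -fu nth_mkseq.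
by rewrite -fv nth_mkseq ?ltn_pmod // (periodic_modn _ fp) /shift subnKC.
Qed.

Lemma omega_eq_is_lasso u v u' v' :
  0 < size v' -> omega_eq u' v' u v <-> is_lasso (lasso u v) u' v'.
Proof.
move=> v'_gt0; split=> [uv | /(is_lasso_eq v'_gt0) uv i]; last by rewrite uv.
exact: eq_is_lasso uv (is_lasso_lasso _ v'_gt0).
Qed.

End Lasso.

Section DollarWords.
Variable S : Type.

Lemma split_dollar (w : seq (option S)) :
  (exists s, w = map Some s) \/ exists s r, w = map Some s ++ dollar :: r.
Proof.
elim: w => [|[a|] w [[s ->] | [s [r ->]]]].
- by left; exists [::].
- by left; exists (a :: s).
- by right; exists (a :: s), r.
- by right; exists [::], (map Some s).
- by right; exists [::], (map Some s ++ dollar :: r).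
Qed.

Lemma map_Some_dollar_inj (s t s' t' : seq S) :
  map Some s ++ dollar :: map Some t = map Some s' ++ dollar :: map Some t' -> s = s' /\ t = t'.
Proof.
elim: s s' => [|a s IHs] [|b s'] //=; first by case=> /(inj_map (@Some_inj _)).
by case=> -> /IHs [-> ->].
Qed.

End DollarWords.

Lemma count_dollar_map (S : eqType) (s : seq S) : count_mem dollar (map Some s) = 0.
Proof. by elim: s. Qed.

Section LassoDFA.
Variables (Sigma : finType) (u v : seq Sigma).
Hypothesis v_gt0 : 0 < size v.

Local Notation word := (lasso u v).
Local Notation red := (reduce_index (size u) (size v)).
Local Notation pos := 'I_(size u + size v).+1.

Definition lasso_dfa_state : finType := option (pos + pos * 'I_(size v).+1 * bool).

(* [None] is a rejecting sink, [inl p] follows u' with [p = red (size u')], and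
   [inr (p, c, b)] follows u' $ v' with [c = size v' %% size v] and [b = (0 < size v')].
   Reading $ requires the suffix at p to be |v|-periodic: every accepted word forces
   this ([periodic_from_periodic]), and it is what makes counting modulo |v| sound. *)
Definition lasso_dfa_trans (q : lasso_dfa_state) (a : option Sigma) : lasso_dfa_state :=
  match q, a with
  | Some (inl p), Some x =>
      if word p == Some x then Some (inl (inord (red p.+1))) else None
  | Some (inl p), None =>
      if `[< periodic (shift word p) (size v) >] then Some (inr (p, ord0, false)) else None
  | Some (inr (p, c, _)), Some x =>
      if word (p + c) == Some x then Some (inr (p, inord (c.+1 %% size v), true)) else None
  | _, _ => None
  end.

(* [c + size v] is a positive representative of [size v'] modulo [size v]. *)
Definition lasso_dfa_final : {pred lasso_dfa_state} := fun q =>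
  if q is Some (inr (p, c, b)) then b && `[< periodic (shift word p) (c + size v) >] else false.

Definition lasso_dfa : dfa (option Sigma) :=
  DFA (Some (inl ord0)) lasso_dfa_trans lasso_dfa_final.

Lemma lasso_dfa_size : dfa_size lasso_dfa <= 11 * (size v * (size u + size v)).
Proof.
rewrite /dfa_size card_option card_sum !card_prod !card_ord card_bool.
nia.
Qed.

Lemma lasso_dfa_run_sink s : foldl lasso_dfa_trans None s = None.
Proof. by elim: s. Qed.

Lemma shift_lasso_reduce x : shift word (red x) =1 shift word x.
Proof. exact/periodic_from_reduce/lasso_periodic_from. Qed.

Lemma inord_reduce x : (inord (red x) : pos) = red x :> nat.
Proof. by rewrite inordK // (leq_trans (reduce_index_lt _ _ v_gt0)). Qed.

Lemma lasso_dfa_run_prefix s :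
  foldl lasso_dfa_trans (Some (inl ord0)) (map Some s) =
  if mkseq word (size s) == map Some s then Some (inl (inord (red (size s)))) else None.
Proof.
elim/last_ind: s => [|s a IHs].
  by congr (Some (inl _)); apply: val_inj; rewrite /= inord_reduce reduce_index0.
rewrite map_rcons foldl_rcons IHs size_rcons mkseqS eqseq_rcons.
case: eqP => _ //=.
have := shift_lasso_reduce (size s) 0; rewrite /shift !addn0 inord_reduce => ->.
by case: eqP => //; rewrite reduce_indexS.
Qed.

Lemma lasso_dfa_run_suffix (p : pos) s : periodic (shift word p) (size v) ->
  foldl lasso_dfa_trans (Some (inr (p, ord0, false))) (map Some s) =
  if mkseq (shift word p) (size s) == map Some s
  then Some (inr (p, inord (size s %% size v), 0 < size s)) else None.
Proof.
move=> pv; elim/last_ind: s => [|s a IHs].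
  by congr (Some (inr (_, _, _))); apply: val_inj; rewrite /= mod0n inordK.
rewrite map_rcons foldl_rcons IHs size_rcons mkseqS eqseq_rcons.
case: eqP => _ //=.
rewrite inordK ?(leq_trans (ltn_pmod _ v_gt0)) //.
have := periodic_modn (size s) pv; rewrite /shift => ->.
by case: eqP => // _; congr (Some (inr (_, inord _, _))); rewrite -addn1 modnDml addn1.
Qed.

Lemma lasso_dfa_accept_cat s t :
  dfa_accept lasso_dfa (map Some s ++ dollar :: map Some t) =
  [&& mkseq word (size s) == map Some s,
      `[< periodic (shift word (size s)) (size v) >],
      mkseq (shift word (size s)) (size t) == map Some t,
      0 < size t &
      `[< periodic (shift word (size s)) (size t %% size v + size v) >]].
Proof.
rewrite /dfa_accept /dfa_run /= foldl_cat lasso_dfa_run_prefix.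
case: eqP => _ /=; last by rewrite lasso_dfa_run_sink.
set p : pos := inord _.
have pE : shift word p =1 shift word (size s) by rewrite inord_reduce; apply: shift_lasso_reduce.
have periodic_pE k : `[< periodic (shift word p) k >] = `[< periodic (shift word (size s)) k >].
  by apply: asbool_equiv_eq; split; apply: eq_periodic_from => // i; rewrite pE.
rewrite periodic_pE; case: asboolP => /= [sv | _]; last by rewrite lasso_dfa_run_sink.
rewrite lasso_dfa_run_suffix; last exact: eq_periodic_from (fsym pE) sv.
rewrite (eq_mkseq pE); case: eqP => //= _.
by rewrite inordK ?periodic_pE // (leq_trans (ltn_pmod _ v_gt0)).
Qed.

Lemma lasso_dfa_accept_catP s t :
  dfa_accept lasso_dfa (map Some s ++ dollar :: map Some t) <-> 0 < size t /\ omega_eq s t u v.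
Proof.
have word_periodic x : periodic_from (size u) (shift word x) (size v).
  exact/periodic_from_shift/lasso_periodic_from.
rewrite lasso_dfa_accept_cat; split.
  case/and5P=> /eqP su _ /eqP tu t_gt0 /asboolP st; split=> //.
  by apply/(omega_eq_is_lasso _ _ _ t_gt0); split; rewrite // (periodic_mod (word_periodic _)).
case=> t_gt0 /(omega_eq_is_lasso _ _ _ t_gt0) [su tu st].
rewrite su tu t_gt0 !eqxx /=; apply/andP; split; apply/asboolP.
  exact: periodic_from_periodic t_gt0 st (word_periodic _).
by rewrite -(periodic_mod (word_periodic _)).
Qed.

Lemma lasso_dfa_reject_Some s : ~~ dfa_accept lasso_dfa (map Some s).
Proof. by rewrite /dfa_accept /dfa_run lasso_dfa_run_prefix; case: ifP. Qed.

Lemma lasso_dfa_reject_dollars s t r :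
  ~~ dfa_accept lasso_dfa (map Some s ++ dollar :: map Some t ++ dollar :: r).
Proof.
rewrite /dfa_accept /dfa_run foldl_cat lasso_dfa_run_prefix.
case: eqP => _ /=; last by rewrite lasso_dfa_run_sink.
case: asboolP => pv /=; last by rewrite lasso_dfa_run_sink.
by rewrite foldl_cat lasso_dfa_run_suffix //; case: eqP => _ /=; rewrite lasso_dfa_run_sink.
Qed.

Lemma lasso_dfaP w : dfa_accept lasso_dfa w <-> lasso_lang u v w.
Proof.
have one_dollar (s t : seq Sigma) : count_mem dollar (map Some s ++ dollar :: map Some t) = 1.
  by rewrite count_cat /= !count_dollar_map.
case: (split_dollar w) => [[s ->] | [s [r ->]]].
  rewrite (negbTE (lasso_dfa_reject_Some s)); split=> // -[s' [t' [e _ _]]].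
  by have := one_dollar s' t'; rewrite -e count_dollar_map.
case: (split_dollar r) => [[t ->] | [t [r' ->]]].
  rewrite lasso_dfa_accept_catP; split=> [[t_gt0 st] | [s' [t' [e t'_gt0 st]]]].
    by exists s, t.
  by case: (map_Some_dollar_inj e) => -> ->.
rewrite (negbTE (lasso_dfa_reject_dollars s t r')); split=> // -[s' [t' [e _ _]]].
by have := one_dollar s' t'; rewrite -e count_cat /= count_cat /= !count_dollar_map.
Qed.

End LassoDFA.

Theorem proposition3 :
  forall Sigma : finType, exists C : nat,
    forall (u v : seq Sigma), 0 < size v ->
      exists D : dfa (option Sigma),
        (forall w, dfa_accept D w <-> lasso_lang u v w) /\
        dfa_size D <= C * (size v * (size u + size v)).
Proof.
move=> Sigma; exists 11 => u v v_gt0; exists (lasso_dfa u v).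
by split; [exact: lasso_dfaP | exact: lasso_dfa_size].
Qed.
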